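(* Every rectangular permutation $\pi$ can be expressed uniquely as $\pi=\psi_{x_m}\circ\cdots\circ\psi_{x_1}(e_0)$ for some $m\ge0$ and letters $x_1,\dots,x_m\in\{1,2,u,d\}$, where each operator $\psi_{x_j}$ is applied to a permutation in its domain.
   Context: A permutation is rectangular if it avoids the patterns $2413,2431,4213,4231$; $e_0$ is the empty permutation (size $0$). For $\pi\in S_n$ (one-line form) and $1\le i,j\le n+1$, $\rho_{i,j}(\pi)\in S_{n+1}$ is obtained by increasing by $1$ every entry $\ge i$ and inserting the value $i$ at position $j$. Operators: $\psi_1=\rho_{1,1}$, domain all rectangular permutations (including $e_0$); $\psi_2=\rho_{1,2}$, domain rectangular $\pi$ of size $\ge1$ with $\pi_1\ne1$; $\psi_u(\pi)=\rho_{\pi_1,1}(\pi)$, same domain as $\psi_2$; $\psi_d(\pi)=\rho_{\pi_1+1,1}(\pi)$, domain rectangular $\pi$ of size $\ge1$. *)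

From mathcomp Require Import all_boot.
Set Implicit Arguments. Unset Strict Implicit. Unset Printing Implicit Defensive.

Definition is_perm (s : seq nat) : bool := perm_eq s (iota 1 (size s)).

Definition order_iso (t p : seq nat) : bool :=
  (size t == size p) &&
  all (fun i => all (fun j => (nth 0 t i < nth 0 t j) == (nth 0 p i < nth 0 p j))
                    (iota 0 (size p))) (iota 0 (size p)).

Definition contains (s p : seq nat) : Prop :=
  exists t, subseq t s /\ order_iso t p.

Definition avoids (s p : seq nat) : Prop := ~ contains s p.

Definition rectangular (s : seq nat) : Prop :=
  is_perm s /\ avoids s [:: 2; 4; 1; 3] /\ avoids s [:: 2; 4; 3; 1]
            /\ avoids s [:: 4; 2; 1; 3] /\ avoids s [:: 4; 2; 3; 1].

(* rho_{i,j}(pi): increase by 1 every entry >= i, then insert value i at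
   (1-indexed) position j. *)
Definition rho (i j : nat) (pi : seq nat) : seq nat :=
  let pi' := map (fun x => if i <= x then x.+1 else x) pi in
  take j.-1 pi' ++ i :: drop j.-1 pi'.

Inductive letter := L1 | L2 | Lu | Ld.

(* first entry pi_1 (only used when size pi >= 1) *)
Definition first (pi : seq nat) : nat := head 0 pi.

Definition psi (x : letter) (pi : seq nat) : seq nat :=
  match x with
  | L1 => rho 1 1 pi
  | L2 => rho 1 2 pi
  | Lu => rho (first pi) 1 pi
  | Ld => rho (first pi).+1 1 pi
  end.

Definition in_dom (x : letter) (pi : seq nat) : Prop :=
  match x with
  | L1 => rectangular pi
  | L2 => rectangular pi /\ 1 <= size pi /\ first pi != 1
  | Lu => rectangular pi /\ 1 <= size pi /\ first pi != 1
  | Ld => rectangular pi /\ 1 <= size pi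
  end.

(* word_gives [:: x_1; ...; x_m] pi target  <->
   psi_{x_m} o ... o psi_{x_1} (pi) = target, each operator applied
   to a permutation in its domain. *)
Fixpoint word_gives (w : seq letter) (pi target : seq nat) : Prop :=
  match w with
  | [::] => pi = target
  | x :: w' => in_dom x pi /\ word_gives w' (psi x pi) target
  end.

From mathcomp Require Import all_boot zify.
Set Implicit Arguments. Unset Strict Implicit. Unset Printing Implicit Defensive.

(* A nonempty rectangular permutation t = a b ... either starts with 1 (t = psi_1 q),
   or has b = a + 1 (psi_u), a = b + 1 (psi_d), or b = 1 (psi_2).  Otherwise a, b > 1
   are not adjacent, and with m = min a b the entries 1 and m + 1 both occur after
   a and b, forming one of 2413, 2431, 4213, 4231 with them.  Deleting the inserted
   entry and standardising gives the smaller rectangular q, hence existence by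
   induction on the size.  Uniqueness: the first two entries of psi_x q determine x,
   and deleting the inserted entry recovers q. *)

Lemma is_permP s : is_perm s <-> uniq s /\ {in s, forall x, 0 < x <= size s}.
Proof.
split=> [P | [U A]].
  by split=> [|x]; rewrite ?(perm_uniq P) ?iota_uniq // (perm_mem P) mem_iota add1n ltnS.
have sub : {subset s <= iota 1 (size s)} by move=> x /A; rewrite mem_iota add1n ltnS.
have [_ eq_s] := uniq_min_size U sub (eq_leq (size_iota 1 (size s))).
by apply: uniq_perm; rewrite ?iota_uniq.
Qed.

Lemma is_perm_mem s x : is_perm s -> (x \in s) = (0 < x <= size s).
Proof. by move=> P; rewrite (perm_mem P) mem_iota add1n ltnS. Qed.

Lemma bump_mono h : {mono bump h : x y / x < y}.
Proof. by move=> x y; rewrite !ltnNge leq_bump2. Qed.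

Lemma rho_bumpE i j q :
  rho i j q = take j.-1 (map (bump i) q) ++ i :: drop j.-1 (map (bump i) q).
Proof.
rewrite /rho (@eq_map _ _ _ (bump i)) // => x.
by rewrite /bump; case: (i <= x).
Qed.

Lemma rho1E i q : rho i 1 q = i :: map (bump i) q.
Proof. by rewrite rho_bumpE take0 drop0. Qed.

Lemma rho2E i a q : rho i 2 (a :: q) = bump i a :: i :: map (bump i) q.
Proof. by rewrite rho_bumpE /= take0 drop0. Qed.

Lemma size_rho i j q : size (rho i j q) = (size q).+1.
Proof. by rewrite rho_bumpE size_cat /= addnS -size_cat cat_take_drop size_map. Qed.

Definition unrho (j : nat) (t : seq nat) : seq nat :=
  map (unbump (nth 0 t j.-1)) (take j.-1 t ++ drop j t).

Lemma rhoK i k q : k <= size q -> unrho k.+1 (rho i k.+1 q) = q.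
Proof.
move=> le_k; rewrite /unrho rho_bumpE /=; set q' := map (bump i) q.
have sz : size (take k q') = k by rewrite size_takel ?size_map.
rewrite nth_cat sz ltnn subnn /= take_size_cat // -cat_rcons.
by rewrite drop_size_cat ?size_rcons ?sz // cat_take_drop (mapK (@bumpK i)).
Qed.

Lemma map_unbumpK l c r : is_perm (l ++ c :: r) ->
  map (bump c) (map (unbump c) (l ++ r)) = l ++ r.
Proof.
move=> /is_permP[+ _]; rewrite -cat1s uniq_catCA cat1s /= => /andP[c_out _].
rewrite -map_comp map_id_in // => x x_in /=.
by apply: unbumpK; rewrite inE; apply: contraNneq c_out => <-.
Qed.

Lemma is_perm_unbump l c r : is_perm (l ++ c :: r) -> is_perm (map (unbump c) (l ++ r)).
Proof.
move=> P; have /is_permP[U range] := P.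
move: (U); rewrite -cat1s uniq_catCA cat1s /= => /andP[c_out uniq_lr].
have c_range : 0 < c <= size (l ++ c :: r) by apply: range; rewrite mem_cat mem_head orbT.
have neq_c x : x \in l ++ r -> x != c by move=> x_in; apply: contraNneq c_out => <-.
apply/is_permP; split.
  rewrite map_inj_in_uniq // => x y /neq_c x_c /neq_c y_c.
  by move/(congr1 (bump c)); rewrite !unbumpK.
move=> _ /mapP[x x_in ->]; have x_c := neq_c x x_in.
have /range : x \in l ++ c :: r by move: x_in; rewrite !mem_cat inE => /orP[]->; rewrite ?orbT.
move: c_range; rewrite size_map !size_cat /= /unbump; case: ltnP; lia.
Qed.

Lemma cat_take_nth_drop (T : Type) (x0 : T) k s :
  k < size s -> take k s ++ nth x0 s k :: drop k.+1 s = s.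
Proof. by move=> lt_k; rewrite -drop_nth ?cat_take_drop. Qed.

Lemma unrhoK c k t :
  is_perm t -> k < size t -> nth 0 t k = c -> rho c k.+1 (unrho k.+1 t) = t.
Proof.
move=> P lt_k <-; rewrite {1}/unrho /= rho_bumpE /=.
move: P; rewrite -{1}(cat_take_nth_drop 0 lt_k) => /map_unbumpK ->.
have sz : size (take k t) = k by rewrite size_takel // ltnW.
by rewrite take_size_cat // drop_size_cat // cat_take_nth_drop.
Qed.

Lemma order_iso_map f t p :
  {mono f : x y / x < y} -> order_iso (map f t) p = order_iso t p.
Proof.
move=> f_mono; rewrite /order_iso size_map; case: eqP => //= sz.
apply: eq_in_all => i; rewrite mem_iota => /andP[_ lt_i].
apply: eq_in_all => j; rewrite mem_iota => /andP[_ lt_j].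
by rewrite !(nth_map 0) ?sz // f_mono.
Qed.

Lemma contains_map f s p :
  {mono f : x y / x < y} -> contains s p -> contains (map f s) p.
Proof.
by move=> f_mono [t [sub iso]]; exists (map f t); rewrite map_subseq ?order_iso_map.
Qed.

Lemma contains_subseq s1 s2 p : subseq s1 s2 -> contains s1 p -> contains s2 p.
Proof. by move=> sub [t [sub_t iso]]; exists t; rewrite (subseq_trans sub_t sub). Qed.

Lemma rectangular_unrho k t : rectangular t -> k < size t -> rectangular (unrho k.+1 t).
Proof.
move=> [P [A1 [A2 [A3 A4]]]] lt_k; rewrite /unrho /=; set c := nth 0 t k.
have sub : subseq (take k t ++ drop k.+1 t) t.
  by rewrite -{3}(cat_take_nth_drop 0 lt_k) cat_subseq ?subseq_cons.
move: P; rewrite -[in is_perm _](cat_take_nth_drop 0 lt_k) => P.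
have avoid p : avoids t p -> avoids (map (unbump c) (take k t ++ drop k.+1 t)) p.
  move=> avoid_p /(contains_map (bump_mono c)); rewrite map_unbumpK //.
  by move/(contains_subseq sub).
by split; [exact: is_perm_unbump | split; [|split; [|split]]]; apply: avoid.
Qed.

Lemma size_psi x q : size (psi x q) = (size q).+1.
Proof. by case: x; apply: size_rho. Qed.

Lemma in_dom_rectangular x q : in_dom x q -> rectangular q.
Proof. by case: x => //= -[]. Qed.

Definition letter_of (t : seq nat) : letter :=
  let a := nth 0 t 0 in let b := nth 0 t 1 in
  if a == 1 then L1 else if b == a.+1 then Lu else if a == b.+1 then Ld else L2.

(* 0-indexed, whereas the positions of [rho] are 1-indexed *)
Definition inserted_at (x : letter) : nat := if x is L2 then 1 else 0.

Lemma letter_of_psi x q : in_dom x q -> letter_of (psi x q) = x.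
Proof.
case: x => [_|||]; first by rewrite /= rho1E.
all: case: q => [|a s] [[P _]] //= D; try by case: D.
all: have := mem_head a s; rewrite (is_perm_mem _ P) => /andP[a_pos _].
all: rewrite /psi /first /= ?rho1E ?rho2E /letter_of /= /bump ?a_pos ?leqnn ?ltnn /=.
all: do ?case: eqP => //; lia.
Qed.

Lemma psiK x q : in_dom x q -> unrho (inserted_at x).+1 (psi x q) = q.
Proof. by case: x => [_|[_ [sz _]]|_|_]; apply: rhoK. Qed.

Lemma psi_inj x x' q q' :
  in_dom x q -> in_dom x' q' -> psi x q = psi x' q' -> x = x' /\ q = q'.
Proof.
move=> D D' E; have eq_x : x = x' by rewrite -(letter_of_psi D) E letter_of_psi.
by move: D E; rewrite eq_x => D E; rewrite -(psiK D) E psiK.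
Qed.

Lemma subseq_pair (T : eqType) (x y : T) s : x \in s -> y \in s -> x != y ->
  subseq [:: x; y] s || subseq [:: y; x] s.
Proof.
elim: s => // z s IH; rewrite !inE => /predU1P[<-|xs] /predU1P[yz|ys] xy.
- by rewrite yz eqxx in xy.
- by rewrite /= eqxx sub1seq ys.
- by rewrite yz /= eqxx sub1seq xs orbT.
case/orP: (IH xs ys xy) => sub; apply/orP; [left | right];
  exact: subseq_trans sub (subseq_cons s z).
Qed.

Lemma contains_prefix_pair a b x y s p :
  subseq [:: x; y] s -> order_iso [:: a; b; x; y] p -> contains [:: a, b & s] p.
Proof. by move=> sub iso; exists [:: a; b; x; y]; rewrite /= !eqxx. Qed.

Lemma rectangular_head_adjacent a b s :
  rectangular [:: a, b & s] -> 1 < a -> 1 < b -> b = a.+1 \/ a = b.+1.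
Proof.
move=> [P [A2413 [A2431 [A4213 A4231]]]] a_gt1 b_gt1.
case: (eqVneq b a.+1) => [|nab]; first by left.
case: (eqVneq a b.+1) => [|nba]; first by right.
exfalso.
have /is_permP[/= /andP[] ] := P; rewrite inE negb_or => /andP[a_ne_b _] _ _.
have in_s x : 0 < x <= (size s).+2 -> x != a -> x != b -> x \in s.
  by rewrite -(is_perm_mem _ P) !inE => /or3P[/eqP->|/eqP->|//]; rewrite eqxx.
have := is_perm_mem a P; rewrite mem_head => /esym/andP[_ /= a_le].
have := is_perm_mem b P; rewrite !inE eqxx orbT => /esym/andP[_ /= b_le].
have one_in : 1 \in s by apply: in_s; lia.
have m_in : (minn a b).+1 \in s by apply: in_s; lia.
have one_ne : 1 != (minn a b).+1 by lia.
case: (ltngtP a b) => [lt_ab|lt_ba|eq_ab]; last by rewrite eq_ab eqxx in a_ne_b.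
all: case/orP: (subseq_pair one_in m_in one_ne) => sub.
all: [> apply: A2413 | apply: A2431 | apply: A4213 | apply: A4231].
all: apply: (contains_prefix_pair sub); rewrite /order_iso /=.
all: repeat (apply/andP; split); apply/eqP; apply/idP/idP; lia.
Qed.

Lemma rectangular_psi_decomp t : rectangular t -> 0 < size t ->
  exists x q, in_dom x q /\ psi x q = t.
Proof.
case: t => [|a t] // R _; have P := R.1.
have := is_perm_mem a P; rewrite mem_head => /esym/andP[a_pos /= a_le].
case: (eqVneq a 1) => [a1 | a_ne1].
  exists L1, (unrho 1 (a :: t)).
  by split; [apply: rectangular_unrho | apply: unrhoK].
case: t R P a_le => [|b s] R P a_le; first by move: a_ne1; rewrite eqn_leq a_le a_pos.
have := is_perm_mem b P; rewrite !inE eqxx orbT => /esym/andP[b_pos _].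
have first_del : first (unrho 1 [:: a, b & s]) = unbump a b by [].
case: (eqVneq b a.+1) => [b_def | b_ne].
  exists Lu, (unrho 1 [:: a, b & s]).
  have first_a : first (unrho 1 [:: a, b & s]) = a.
    by rewrite first_del b_def /unbump ltnSn subn1.
  rewrite /in_dom /psi first_a; split; last by apply: unrhoK.
  by split; [apply: rectangular_unrho | split].
case: (eqVneq a b.+1) => [a_def | a_ne].
  exists Ld, (unrho 1 [:: a, b & s]).
  have first_b : first (unrho 1 [:: a, b & s]) = b.
    by rewrite first_del /unbump a_def ltnNge leqnSn subn0.
  rewrite /in_dom /psi first_b -a_def; split; last by apply: unrhoK.
  by split; first apply: rectangular_unrho.
have b1 : b = 1.
  case: (eqVneq b 1) => // b_ne1.
  have : b = a.+1 \/ a = b.+1 by apply: (rectangular_head_adjacent R); lia.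
  lia.
exists L2, (unrho 2 [:: a, b & s]).
have first_pred : first (unrho 2 [:: a, b & s]) = a.-1.
  have a_gt1 : 1 < a by lia.
  by rewrite /= /unbump b1 a_gt1 subn1.
rewrite /in_dom /psi first_pred; split; last by apply: unrhoK.
by split; [apply: rectangular_unrho | split => //; lia].
Qed.

Lemma word_gives_rcons w x p t :
  word_gives (rcons w x) p t <-> exists q, word_gives w p q /\ in_dom x q /\ psi x q = t.
Proof.
elim: w p => [|y w IH] p /=; first by split=> [DE | [q [-> DE]]]; first exists p.
split=> [[D /IH[q [W DE]]] | [q [[D W] DE]]]; first by exists q.
by split; last by apply/IH; exists q.
Qed.

Lemma size_word_gives w p t : word_gives w p t -> size t = size p + size w.
Proof.
elim: w p => [|x w IH] p /=; first by move=> ->; rewrite addn0.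
by move=> [_ /IH ->]; rewrite size_psi addnS.
Qed.

Lemma word_gives_exists t : rectangular t -> exists w, word_gives w [::] t.
Proof.
move Et: (size t) => n; elim: n t Et => [|n IH] t Et R.
  by exists [::]; move/eqP: Et; rewrite size_eq0 => /eqP.
have size_pos : 0 < size t by rewrite Et.
have [x [q [D E]]] := rectangular_psi_decomp R size_pos.
have [w W] : exists w, word_gives w [::] q.
  by apply: IH (in_dom_rectangular D); move: Et; rewrite -E size_psi => -[].
by exists (rcons w x); apply/word_gives_rcons; exists q.
Qed.

Lemma word_gives_inj w w' t : word_gives w [::] t -> word_gives w' [::] t -> w = w'.
Proof.
elim/last_ind: w w' t => [|w x IH] w' t W; case/lastP: w' => [|w' x'] W'.
- by [].
- by move: (size_word_gives W'); rewrite -W size_rcons.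
- by move: (size_word_gives W); rewrite -W' size_rcons.
move/word_gives_rcons: W => [q [Wq [D E]]].
move/word_gives_rcons: W' => [q' [Wq' [D' E']]].
have [-> eq_q] := psi_inj D D' (etrans E (esym E')).
by rewrite (IH w' q) // eq_q.
Qed.

Theorem corollary4p3 (pi : seq nat) :
  rectangular pi -> exists! w : seq letter, word_gives w [::] pi.
Proof.
move=> R; have [w W] := word_gives_exists R.
by exists w; split=> // w'; apply: word_gives_inj.
Qed.
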